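(* The universal abstract regular polytope $\mathcal{Q}=\{\{4,3\}_3,\{3,4\}_3\}$, with hemicubes as facets and hemi-octahedra as vertex figures, has no proper quotients: every polytope $\mathcal{R}$ admitting a covering $\mathcal{Q}\to\mathcal{R}$ is isomorphic to $\mathcal{Q}$.
   Context: The universal polytope $\{\mathcal{K},\mathcal{L}\}$ is the regular rank-4 abstract polytope with facets $\mathcal{K}$ and vertex figures $\mathcal{L}$ covering every regular polytope with these facets and vertex figures. $\{4,3\}_3=\{4,3\}/2$ is the hemicube and $\{3,4\}_3=\{3,4\}/2$ the hemi-octahedron (quotients of the cube and octahedron by their central inversion). A covering is a rank- and order-preserving surjection between polytopes mapping flags onto flags and preserving adjacency of flags; a quotient of $\mathcal{Q}$ is the image of such a covering, and a proper quotient is one not isomorphic to $\mathcal{Q}$. *)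

From Stdlib Require Import Arith Lia.

(* A poset-with-rank.  Ranks are shifted by +1: a face of (paper) rank j
   has [prk] equal to j+1, so the minimal face F_{-1} has prk 0 and the
   maximal face F_n of an n-polytope has prk (n+1). *)
Record Poset := { pt :> Type; ple : pt -> pt -> Prop; prk : pt -> nat }.

(* A flag of a rank-n polytope, listed by rank: f i is its face of prk i,
   for i = 0 .. n+1 (values beyond n+1 are irrelevant). *)
Definition is_flag (P : Poset) (n : nat) (f : nat -> P) : Prop :=
  (forall i, i <= S n -> prk P (f i) = i) /\
  (forall i j, i <= j -> j <= S n -> ple P (f i) (f j)).

Definition flag_eq (P : Poset) (n : nat) (f g : nat -> P) : Prop :=
  forall i, i <= S n -> f i = g i.

Definition adjacent (P : Poset) (n i : nat) (f g : nat -> P) : Prop :=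
  i <= S n /\ f i <> g i /\ (forall j, j <= S n -> j <> i -> f j = g j).

Definition strongly_flag_connected (P : Poset) (n : nat) : Prop :=
  forall f g, is_flag P n f -> is_flag P n g ->
  exists (k : nat) (h : nat -> nat -> P),
    flag_eq P n (h 0) f /\ flag_eq P n (h k) g /\
    (forall m, m <= k ->
       is_flag P n (h m) /\
       (forall j, j <= S n -> f j = g j -> h m j = f j)) /\
    (forall m, m < k -> exists i, adjacent P n i (h m) (h (S m))).

Definition is_polytope (n : nat) (P : Poset) : Prop :=
  (forall x, ple P x x) /\
  (forall x y, ple P x y -> ple P y x -> x = y) /\
  (forall x y z, ple P x y -> ple P y z -> ple P x z) /\
  (forall x, prk P x <= S n) /\
  (forall x y, ple P x y -> x <> y -> prk P x < prk P y) /\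
  (exists b, prk P b = 0 /\ forall x, ple P b x) /\
  (exists t, prk P t = S n /\ forall x, ple P x t) /\
  (* graded: every maximal chain meets every rank *)
  (forall x y i, ple P x y -> prk P x <= i -> i <= prk P y ->
     exists z, ple P x z /\ ple P z y /\ prk P z = i) /\
  (forall x y, ple P x y -> prk P y = prk P x + 2 ->
     exists z1 z2, z1 <> z2 /\
       ple P x z1 /\ ple P z1 y /\ z1 <> x /\ z1 <> y /\
       ple P x z2 /\ ple P z2 y /\ z2 <> x /\ z2 <> y /\
       (forall z, ple P x z -> ple P z y -> z <> x -> z <> y ->
                  z = z1 \/ z = z2)) /\
  strongly_flag_connected P n.

Definition order_iso (P Q : Poset) (f : P -> Q) : Prop :=
  (exists g : Q -> P, (forall x, g (f x) = x) /\ (forall y, f (g y) = y)) /\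
  (forall x y, ple P x y <-> ple Q (f x) (f y)).

Definition isomorphic (P Q : Poset) : Prop := exists f : P -> Q, order_iso P Q f.

Definition is_regular (n : nat) (P : Poset) : Prop :=
  is_polytope n P /\
  forall f g, is_flag P n f -> is_flag P n g ->
    exists s : P -> P, order_iso P P s /\ forall i, i <= S n -> s (f i) = g i.

Definition facet_section (P : Poset) (F : P) : Poset :=
  {| pt := { H : P | ple P H F };
     ple := fun a b => ple P (proj1_sig a) (proj1_sig b);
     prk := fun a => prk P (proj1_sig a) |}.

Definition vfig_section (P : Poset) (v : P) : Poset :=
  {| pt := { H : P | ple P v H };
     ple := fun a b => ple P (proj1_sig a) (proj1_sig b);
     prk := fun a => prk P (proj1_sig a) - 1 |}.

(* In a rank-n polytope the facets have paper rank n-1, i.e. prk n;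
   vertices have paper rank 0, i.e. prk 1. *)
Definition has_facets (n : nat) (P K : Poset) : Prop :=
  forall F : P, prk P F = n -> isomorphic (facet_section P F) K.

Definition has_vertex_figures (P L : Poset) : Prop :=
  forall v : P, prk P v = 1 -> isomorphic (vfig_section P v) L.

Definition covering (n : nat) (P R : Poset) (f : P -> R) : Prop :=
  (forall x, prk R (f x) = prk P x) /\
  (forall x y, ple P x y -> ple R (f x) (f y)) /\
  (forall y, exists x, f x = y) /\
  (forall phi, is_flag R n phi ->
     exists psi, is_flag P n psi /\ forall i, i <= S n -> f (psi i) = phi i) /\
  (forall i phi psi, is_flag P n phi -> is_flag P n psi -> adjacent P n i phi psi ->
     adjacent R n i (fun j => f (phi j)) (fun j => f (psi j))).

Definition is_universal4 (K L Q : Poset) : Prop :=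
  is_regular 4 Q /\ has_facets 4 Q K /\ has_vertex_figures Q L /\
  forall P : Poset, is_regular 4 P -> has_facets 4 P K -> has_vertex_figures P L ->
    exists f : Q -> P, covering 4 Q P f.

(* Nonempty faces of the cube [-1,1]^3 are sign vectors v in {0,+,-}^3:
   the face {x | x_i = v_i whenever v_i <> 0}; (0,0,0) is the whole cube.
   The hemicube identifies v with -v; we use canonical representatives
   (first nonzero coordinate +), and None for the empty face. *)
Inductive sgn := Zr | Pl | Mi.

Definition sneg (s : sgn) : sgn :=
  match s with Zr => Zr | Pl => Mi | Mi => Pl end.

Definition cvec := (sgn * sgn * sgn)%type.

Definition vneg (v : cvec) : cvec :=
  let '(a, b, c) := v in (sneg a, sneg b, sneg c).

Definition canonb (v : cvec) : bool :=
  match v with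
  | (Zr, Zr, Zr) => true
  | (Zr, Zr, Pl) => true
  | (Zr, Zr, Mi) => false
  | (Zr, Pl, _) => true
  | (Zr, Mi, _) => false
  | (Pl, _, _) => true
  | (Mi, _, _) => false
  end.

(* face v is contained in face w *)
Definition refines (v w : cvec) : Prop :=
  let '(a1, a2, a3) := v in
  let '(b1, b2, b3) := w in
  (b1 <> Zr -> a1 = b1) /\ (b2 <> Zr -> a2 = b2) /\ (b3 <> Zr -> a3 = b3).

Definition zr_count (s : sgn) : nat := match s with Zr => 1 | _ => 0 end.

Definition hc_face := option { v : cvec | canonb v = true }.

Definition hc_le (x y : hc_face) : Prop :=
  match x, y with
  | None, _ => True
  | Some _, None => False
  | Some a, Some b =>
      refines (proj1_sig a) (proj1_sig b) \/
      refines (proj1_sig a) (vneg (proj1_sig b))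
  end.

Definition hc_rk (x : hc_face) : nat :=
  match x with
  | None => 0
  | Some a => let '(p, q, r) := proj1_sig a in
              1 + zr_count p + zr_count q + zr_count r
  end.

Definition hemicube : Poset := {| pt := hc_face; ple := hc_le; prk := hc_rk |}.

Definition hemioctahedron : Poset :=
  {| pt := hc_face; ple := fun x y => hc_le y x; prk := fun x => 4 - hc_rk x |}.

From Stdlib Require Import Arith Lia List Bool Classical IndefiniteDescription Eqdep_dec ProofIrrelevance.
Import ListNotations.

(* In the hemicube any two of the four vertices lie on exactly one edge and
   every vertex lies on every square; dually in the hemi-octahedral vertex
   figures any two facets through a vertex share exactly one 2-face and every
   edge through a vertex lies in every facet through it.  Moving along a flag
   path, a vertex is only ever exchanged inside an edge, which then lies in
   every facet containing the old vertex; so every vertex of Q lies in every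
   facet.  Consequently any two vertices of Q span a unique edge and any two
   facets meet in a unique 2-face.

   A covering f : Q -> R preserves adjacency of flags, so it cannot identify
   two vertices lying on a common edge, nor two facets through a common
   2-face: f is injective on vertices and facets.  By the diamond condition
   an edge of R has exactly two vertices, so two edges of Q with the same
   image have the same two vertices and are equal; dually for 2-faces.  A
   bijective covering lifts flags, hence reflects the order, and is an
   isomorphism. *)

(* Ranks of [dual P n] are counted down from [n]; with [n] the rank of the top
   face, [pairwise_joined (dual Q 5) 1 2] speaks of facets and 2-faces. *)
Definition dual (P : Poset) (n : nat) : Poset :=
  {| pt := P; ple := fun x y => ple P y x; prk := fun x => n - prk P x |}.

Definition injective_on_rank {P R : Poset} (f : P -> R) (k : nat) : Prop :=
  forall x y, prk P x = k -> prk P y = k -> f x = f y -> x = y.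

Lemma injective_of_ranks (P R : Poset) (f : P -> R) (m : nat) :
  (forall x, prk R (f x) = prk P x) -> (forall x, prk P x <= m) ->
  (forall k, k <= m -> injective_on_rank f k) ->
  forall x y, f x = f y -> x = y.
Proof.
  intros Hprk Hbound Hinj x y Exy.
  assert (Hxy : prk P x = prk P y) by (rewrite <- !Hprk, Exy; reflexivity).
  apply (Hinj (prk P x)); auto.
Qed.

Lemma exist_neq {A : Type} {p : A -> Prop} {a b : A} {Ha : p a} {Hb : p b} :
  a <> b -> exist p a Ha <> exist p b Hb.
Proof. intros Hne E. injection E. exact Hne. Qed.

(** * Ranks are determined by the order *)

Definition graded_from_bottom (P : Poset) : Prop :=
  (forall x y, ple P x y -> x <> y -> prk P x < prk P y) /\
  (forall x, 0 < prk P x -> exists y, ple P y x /\ prk P y = prk P x - 1) /\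
  (forall x, prk P x = 0 <-> forall y, ple P x y).

Lemma order_iso_prk (A B : Poset) (phi : A -> B) :
  graded_from_bottom A -> graded_from_bottom B -> order_iso A B phi ->
  forall x, prk B (phi x) = prk A x.
Proof.
  intros [ltA [predA minA]] [ltB [predB minB]] [[psi [psi_phi phi_psi]] le_iff] x.
  remember (prk A x) as k eqn:Hk. revert x Hk.
  induction k as [k IH] using lt_wf_ind; intros x Hk.
  destruct k as [|k].
  - apply minB. intros y. rewrite <- (phi_psi y). apply le_iff, minA. auto.
  - destruct (predA x) as [y [Hyx Hy]]; [lia|].
    assert (Hlow : k < prk B (phi x)).
    { rewrite <- (IH k ltac:(lia) y ltac:(lia)).
      apply ltB; [apply le_iff, Hyx|].
      intros E. apply (f_equal psi) in E. rewrite !psi_phi in E. subst. lia. }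
    destruct (predB (phi x)) as [w [Hwx Hw]]; [lia|].
    assert (Hup : prk A (psi w) < prk A x).
    { apply ltA; [apply le_iff; rewrite phi_psi; exact Hwx|].
      intros E. assert (w = phi x) by (rewrite <- E, phi_psi; reflexivity).
      subst w. lia. }
    rewrite <- (phi_psi w), (IH (prk A (psi w))) in Hw by lia. lia.
Qed.

Definition diamond_at (P : Poset) (k : nat) : Prop :=
  forall x, prk P x = S k -> exists z1 z2, z1 <> z2 /\
    forall z, (prk P z = k /\ ple P z x) <-> z = z1 \/ z = z2.

Section Polytope.
Variables (P : Poset) (n : nat).
Hypothesis HP : is_polytope n P.

Lemma ple_refl x : ple P x x.
Proof. destruct HP as (H & _); auto. Qed.
Lemma ple_antisym x y : ple P x y -> ple P y x -> x = y.
Proof. destruct HP as (_ & H & _); auto. Qed.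
Lemma ple_trans x y z : ple P x y -> ple P y z -> ple P x z.
Proof. destruct HP as (_ & _ & H & _); eauto. Qed.
Lemma prk_bound x : prk P x <= S n.
Proof. destruct HP as (_ & _ & _ & H & _); auto. Qed.
Lemma prk_lt x y : ple P x y -> x <> y -> prk P x < prk P y.
Proof. destruct HP as (_ & _ & _ & _ & H & _); auto. Qed.
Lemma bottom_exists : exists b, prk P b = 0 /\ forall x, ple P b x.
Proof. destruct HP as (_ & _ & _ & _ & _ & H & _); auto. Qed.
Lemma top_exists : exists t, prk P t = S n /\ forall x, ple P x t.
Proof. destruct HP as (_ & _ & _ & _ & _ & _ & H & _); auto. Qed.
Lemma graded_between x y i : ple P x y -> prk P x <= i -> i <= prk P y ->
  exists z, ple P x z /\ ple P z y /\ prk P z = i.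
Proof. destruct HP as (_ & _ & _ & _ & _ & _ & _ & H & _); auto. Qed.
Lemma diamond x y : ple P x y -> prk P y = prk P x + 2 ->
  exists z1 z2, z1 <> z2 /\
    ple P x z1 /\ ple P z1 y /\ z1 <> x /\ z1 <> y /\
    ple P x z2 /\ ple P z2 y /\ z2 <> x /\ z2 <> y /\
    (forall z, ple P x z -> ple P z y -> z <> x -> z <> y -> z = z1 \/ z = z2).
Proof. destruct HP as (_ & _ & _ & _ & _ & _ & _ & _ & H & _); auto. Qed.
Lemma flag_connected : strongly_flag_connected P n.
Proof. destruct HP as (_ & _ & _ & _ & _ & _ & _ & _ & _ & H); auto. Qed.

Lemma prk_le x y : ple P x y -> prk P x <= prk P y.
Proof.
  intros Hxy. destruct (classic (x = y)) as [->|Hne]; [lia|].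
  apply Nat.lt_le_incl, prk_lt; auto.
Qed.

Lemma bottom_below x y : prk P x = 0 -> ple P x y.
Proof.
  intros Hx. destruct bottom_exists as [b [Hb Hbot]].
  replace x with b; [apply Hbot|].
  apply NNPP. intros Hne. pose proof (prk_lt b x (Hbot x) Hne). lia.
Qed.

Lemma top_above x y : prk P x = S n -> ple P y x.
Proof.
  intros Hx. destruct top_exists as [t [Ht Htop]].
  replace x with t; [apply Htop|].
  apply NNPP. intros Hne. pose proof (prk_lt x t (Htop x) (not_eq_sym Hne)). lia.
Qed.

Lemma injective_on_rank_bottom (R : Poset) (f : P -> R) : injective_on_rank f 0.
Proof. intros x y Hx Hy _. apply ple_antisym; apply bottom_below; auto. Qed.

Lemma injective_on_rank_top (R : Poset) (f : P -> R) : injective_on_rank f (S n).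
Proof. intros x y Hx Hy _. apply ple_antisym; apply top_above; auto. Qed.

Lemma face_above x k : prk P x <= k -> k <= S n -> exists y, prk P y = k /\ ple P x y.
Proof.
  intros H1 H2. destruct top_exists as [t [Ht Htop]].
  destruct (graded_between x t k (Htop x)) as [y (Hxy & _ & Hy)]; [lia|lia|eauto].
Qed.

Lemma face_below x k : k <= prk P x -> exists y, prk P y = k /\ ple P y x.
Proof.
  intros H. destruct bottom_exists as [b [Hb Hbot]].
  destruct (graded_between b x k (Hbot x)) as [y (_ & Hyx & Hy)]; [lia|lia|eauto].
Qed.

Lemma interval_two_faces x y : ple P x y -> prk P y = prk P x + 2 ->
  exists z1 z2, z1 <> z2 /\
    forall z, (ple P x z /\ ple P z y /\ prk P z = prk P x + 1) <-> z = z1 \/ z = z2.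
Proof.
  intros Hxy Hr.
  destruct (diamond x y Hxy Hr)
    as (z1 & z2 & Hne & H1x & H1y & N1x & N1y & H2x & H2y & N2x & N2y & Hall).
  assert (Hmid : forall w, ple P x w -> ple P w y -> w <> x -> w <> y ->
                           prk P w = prk P x + 1).
  { intros w Hxw Hwy Nx Ny.
    pose proof (prk_lt x w Hxw (not_eq_sym Nx)). pose proof (prk_lt w y Hwy Ny). lia. }
  exists z1, z2. split; [exact Hne|]. intros z. split.
  - intros (Hxz & Hzy & Hz). apply Hall; auto; intros ->; lia.
  - intros [-> | ->]; auto.
Qed.

Lemma diamond_at_1 : diamond_at P 1.
Proof.
  intros x Hx. destruct bottom_exists as [b [Hb Hbot]].
  destruct (interval_two_faces b x (Hbot x)) as (z1 & z2 & Hne & Hz); [lia|].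
  exists z1, z2. split; [exact Hne|]. intros z. rewrite <- (Hz z), Hb.
  split; [intros [Hz1 Hzx]; auto | intros (_ & Hzx & Hz1); auto].
Qed.

Lemma dual_diamond_at_1 : diamond_at (dual P (S n)) 1.
Proof.
  intros x Hx. change (S n - prk P x = 2) in Hx. destruct top_exists as [t [Ht Htop]].
  pose proof (prk_bound x).
  destruct (interval_two_faces x t (Htop x)) as (z1 & z2 & Hne & Hz); [lia|].
  exists z1, z2. split; [exact Hne|]. intros z. cbn [dual prk ple]. rewrite <- (Hz z).
  pose proof (prk_bound z).
  split; [intros [Hz1 Hxz]; repeat split; auto; lia | intros (Hxz & _ & Hz1); split; auto; lia].
Qed.

Lemma flag_prk phi i : is_flag P n phi -> i <= S n -> prk P (phi i) = i.
Proof. intros [H _]; auto. Qed.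

Lemma flag_ple phi i j : is_flag P n phi -> i <= j -> j <= S n -> ple P (phi i) (phi j).
Proof. intros [_ H]; auto. Qed.

Definition chain_on (h : nat -> P) (p q : nat) : Prop :=
  (forall i, p <= i -> i <= q -> prk P (h i) = i) /\
  (forall i j, p <= i -> i <= j -> j <= q -> ple P (h i) (h j)).

Lemma chain_between d : forall a b, ple P a b -> prk P b = prk P a + d ->
  exists h, chain_on h (prk P a) (prk P b) /\ h (prk P a) = a /\ h (prk P b) = b.
Proof.
  induction d as [|d IH]; intros a b Hab Hr.
  - assert (a = b) as <- by (apply NNPP; intros Hne; pose proof (prk_lt a b Hab Hne); lia).
    exists (fun _ => a). repeat split; intros; [lia | apply ple_refl].
  - destruct (graded_between a b (prk P a + d) Hab) as [z (Haz & Hzb & Hz)]; [lia|lia|].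
    destruct (IH a z Haz) as [h [[Hh_prk Hh_ple] [Ha Hz']]]; [lia|].
    exists (fun i => if Nat.eqb i (prk P b) then b else h i).
    repeat split.
    + intros i H1 H2. destruct (Nat.eqb_spec i (prk P b)); auto. apply Hh_prk; lia.
    + intros i j H1 H2 H3.
      destruct (Nat.eqb_spec i (prk P b)), (Nat.eqb_spec j (prk P b)); try lia.
      * apply ple_refl.
      * apply ple_trans with z; auto. rewrite <- Hz'. apply Hh_ple; lia.
      * apply Hh_ple; lia.
    + destruct (Nat.eqb_spec (prk P a) (prk P b)); [lia | exact Ha].
    + rewrite Nat.eqb_refl. reflexivity.
Qed.

Lemma chain_glue h1 h2 p q r : chain_on h1 p q -> chain_on h2 q r -> h1 q = h2 q ->
  p <= q -> q <= r -> chain_on (fun i => if Nat.leb i q then h1 i else h2 i) p r.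
Proof.
  intros [A1 A2] [B1 B2] E Hpq Hqr. split.
  - intros i H1 H2. destruct (Nat.leb_spec i q); [apply A1 | apply B1]; lia.
  - intros i j H1 H2 H3. destruct (Nat.leb_spec i q), (Nat.leb_spec j q); try lia.
    + apply A2; lia.
    + apply ple_trans with (h1 q); [apply A2; lia|]. rewrite E. apply B2; lia.
    + apply B2; lia.
Qed.

Lemma flag_through x y : ple P x y ->
  exists phi, is_flag P n phi /\ phi (prk P x) = x /\ phi (prk P y) = y.
Proof.
  intros Hxy. destruct bottom_exists as [b [Hb Hbot]]. destruct top_exists as [t [Ht Htop]].
  pose proof (prk_le x y Hxy) as Hxy_prk. pose proof (prk_bound y).
  destruct (chain_between (prk P x) b x (Hbot x)) as [h1 [C1 [E1 F1]]]; [lia|].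
  destruct (chain_between (prk P y - prk P x) x y Hxy) as [h2 [C2 [E2 F2]]]; [lia|].
  destruct (chain_between (S n - prk P y) y t (Htop y)) as [h3 [C3 [E3 F3]]]; [lia|].
  rewrite Hb in C1, E1. rewrite Ht in C3, F3.
  set (h12 := fun i => if Nat.leb i (prk P x) then h1 i else h2 i).
  assert (C12 : chain_on h12 0 (prk P y))
    by (apply chain_glue; auto; [congruence | lia]).
  assert (E12 : h12 (prk P y) = y).
  { unfold h12. destruct (Nat.leb_spec (prk P y) (prk P x)); auto.
    assert (Exy : prk P x = prk P y) by lia. rewrite <- Exy, F1.
    apply ple_antisym; auto. rewrite <- F2, <- Exy, E2. apply ple_refl. }
  destruct (chain_glue h12 h3 0 (prk P y) (S n) C12 C3 ltac:(congruence) ltac:(lia) ltac:(lia))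
    as [Hprk Hple].
  exists (fun i => if Nat.leb i (prk P y) then h12 i else h3 i). repeat split.
  - intros i Hi. apply Hprk; lia.
  - intros i j Hij Hj. apply Hple; lia.
  - rewrite (proj2 (Nat.leb_le _ _) Hxy_prk). unfold h12. rewrite Nat.leb_refl. exact F1.
  - rewrite Nat.leb_refl. exact E12.
Qed.

Lemma flag_exchange phi i z : is_flag P n phi -> 1 <= i -> i <= n -> prk P z = i ->
  ple P (phi (i - 1)) z -> ple P z (phi (S i)) -> phi i <> z ->
  is_flag P n (fun j => if Nat.eqb j i then z else phi j) /\
  adjacent P n i phi (fun j => if Nat.eqb j i then z else phi j).
Proof.
  intros Hphi H1 H2 Hz Hlo Hhi Hne. repeat split.
  - intros j Hj. destruct (Nat.eqb_spec j i) as [->|]; auto. apply flag_prk; auto.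
  - intros j k Hjk Hk. destruct (Nat.eqb_spec j i), (Nat.eqb_spec k i).
    + apply ple_refl.
    + apply ple_trans with (phi (S i)); auto. apply flag_ple; auto; lia.
    + apply ple_trans with (phi (i - 1)); auto. apply flag_ple; auto; lia.
    + apply flag_ple; auto.
  - lia.
  - rewrite Nat.eqb_refl. exact Hne.
  - intros j _ Hj. destruct (Nat.eqb_spec j i); [contradiction | reflexivity].
Qed.

Lemma facet_section_graded F : graded_from_bottom (facet_section P F).
Proof.
  destruct bottom_exists as [b [Hb Hbot]].
  split; [|split].
  - intros [x Hx] [y Hy] Hxy Hne. apply prk_lt; auto.
    intros E. apply Hne. apply subset_eq_compat. exact E.
  - intros [x Hx] Hpos. simpl in *.
    destruct (graded_between b x (prk P x - 1) (Hbot x)) as [z (_ & Hzx & Hz)]; [lia|lia|].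
    exists (exist _ z (ple_trans _ _ _ Hzx Hx)). simpl. auto.
  - intros [x Hx]. simpl. split.
    + intros Hx0 [y Hy]. apply bottom_below, Hx0.
    + intros Hmin. specialize (Hmin (exist _ b (Hbot F))). simpl in Hmin.
      rewrite (ple_antisym x b Hmin (Hbot x)). exact Hb.
Qed.

Lemma dual_vfig_section_graded v : prk P v = 1 -> graded_from_bottom (dual (vfig_section P v) n).
Proof.
  intros Hv. destruct top_exists as [t [Ht Htop]].
  assert (Hge : forall x, ple P v x -> 1 <= prk P x) by (intros x Hx; rewrite <- Hv; apply prk_le, Hx).
  split; [|split].
  - intros [x Hx] [y Hy] Hyx Hne. simpl in *.
    assert (prk P y < prk P x).
    { apply prk_lt; auto. intros E. apply Hne. apply subset_eq_compat. auto. }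
    pose proof (prk_bound x). pose proof (Hge y Hy). lia.
  - intros [x Hx] Hpos. simpl in *. pose proof (Hge x Hx).
    destruct (graded_between x t (prk P x + 1) (Htop x)) as [z (Hxz & _ & Hz)]; [lia|lia|].
    exists (exist _ z (ple_trans _ _ _ Hx Hxz)). simpl. split; [exact Hxz | lia].
  - intros [x Hx]. simpl. split.
    + intros H0 [y Hy]. apply top_above. pose proof (prk_bound x). pose proof (Hge x Hx). lia.
    + intros Hmax. specialize (Hmax (exist _ t (Htop v))). simpl in Hmax.
      rewrite (ple_antisym x t (Htop x) Hmax), Ht. lia.
Qed.

End Polytope.

Definition pairwise_joined (P : Poset) (i j : nat) : Prop :=
  forall a b, prk P a = i -> prk P b = i -> a <> b ->
  exists c, prk P c = j /\ ple P a c /\ ple P b c.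

Definition unique_join (P : Poset) (i j : nat) : Prop :=
  forall a b c c', prk P a = i -> prk P b = i -> a <> b -> prk P c = j -> prk P c' = j ->
  ple P a c -> ple P b c -> ple P a c' -> ple P b c' -> c = c'.

Definition incident_all (P : Poset) (i j : nat) : Prop :=
  forall a c, prk P a = i -> prk P c = j -> ple P a c.

Definition hemicube_like (P : Poset) : Prop :=
  pairwise_joined P 1 2 /\ unique_join P 1 2 /\ incident_all P 1 3.

Lemma hemicube_like_transfer (A K : Poset) (phi : A -> K) :
  order_iso A K phi -> (forall x, prk K (phi x) = prk A x) ->
  hemicube_like K -> hemicube_like A.
Proof.
  intros [[psi [psi_phi phi_psi]] le_iff] Hprk (Hjoin & Huniq & Hinc).
  assert (prk_psi : forall c, prk A (psi c) = prk K c)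
    by (intros c; rewrite <- Hprk, phi_psi; reflexivity).
  assert (phi_neq : forall a b, a <> b -> phi a <> phi b)
    by (intros a b Hne E; apply Hne; rewrite <- (psi_phi a), E; apply psi_phi).
  split; [|split].
  - intros a b Ha Hb Hab.
    destruct (Hjoin (phi a) (phi b)) as [c (Hc & Hac & Hbc)]; rewrite ?Hprk; auto.
    exists (psi c). rewrite prk_psi, !le_iff, phi_psi. auto.
  - intros a b c c' Ha Hb Hab Hc Hc' Hac Hbc Hac' Hbc'.
    rewrite <- (psi_phi c), <- (psi_phi c'). f_equal.
    apply (Huniq (phi a) (phi b)); rewrite ?Hprk; auto; apply le_iff; auto.
  - intros a c Ha Hc. apply le_iff, Hinc; rewrite Hprk; auto.
Qed.

(** * Deciding properties of finite posets *)

Record finite_decidable (P : Poset) := {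
  fd_elems : list P;
  fd_complete : forall x, In x fd_elems;
  fd_leb : P -> P -> bool;
  fd_leb_spec : forall x y, ple P x y <-> fd_leb x y = true;
  fd_eqb : P -> P -> bool;
  fd_eqb_spec : forall x y, fd_eqb x y = true <-> x = y }.

Arguments fd_elems {P}. Arguments fd_complete {P}. Arguments fd_leb {P}.
Arguments fd_leb_spec {P}. Arguments fd_eqb {P}. Arguments fd_eqb_spec {P}.

Section FiniteDecision.
Variables (P : Poset) (D : finite_decidable P).

Lemma forallb_fd (p : P -> bool) : forallb p (fd_elems D) = true -> forall x, p x = true.
Proof. rewrite forallb_forall. intros H x. apply H, fd_complete. Qed.

Lemma existsb_fd (p : P -> bool) : existsb p (fd_elems D) = true -> exists x, p x = true.
Proof. rewrite existsb_exists. intros [x [_ H]]. eauto. Qed.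

Lemma fd_eqb_neq x y : x <> y -> fd_eqb D x y = false.
Proof. intros Hne. apply not_true_is_false. rewrite fd_eqb_spec. exact Hne. Qed.

Definition strict_monob : bool :=
  forallb (fun x => forallb (fun y =>
    implb (fd_leb D x y && negb (fd_eqb D x y)) (prk P x <? prk P y))
  (fd_elems D)) (fd_elems D).

Definition lower_coversb : bool :=
  forallb (fun x => implb (0 <? prk P x)
    (existsb (fun y => fd_leb D y x && (prk P y =? prk P x - 1)) (fd_elems D)))
  (fd_elems D).

Definition pairwise_joinedb (i j : nat) : bool :=
  forallb (fun a => forallb (fun b =>
    implb ((prk P a =? i) && (prk P b =? i) && negb (fd_eqb D a b))
      (existsb (fun c => (prk P c =? j) && fd_leb D a c && fd_leb D b c) (fd_elems D)))
  (fd_elems D)) (fd_elems D).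

Definition unique_joinb (i j : nat) : bool :=
  forallb (fun a => forallb (fun b => forallb (fun c => forallb (fun c' =>
    implb ((prk P a =? i) && (prk P b =? i) && negb (fd_eqb D a b) &&
           (prk P c =? j) && (prk P c' =? j) && fd_leb D a c && fd_leb D b c &&
           fd_leb D a c' && fd_leb D b c')
      (fd_eqb D c c'))
  (fd_elems D)) (fd_elems D)) (fd_elems D)) (fd_elems D).

Definition incident_allb (i j : nat) : bool :=
  forallb (fun a => forallb (fun c =>
    implb ((prk P a =? i) && (prk P c =? j)) (fd_leb D a c))
  (fd_elems D)) (fd_elems D).

Lemma strict_monob_spec : strict_monob = true ->
  forall x y, ple P x y -> x <> y -> prk P x < prk P y.
Proof.
  intros H x y Hxy Hne.
  pose proof (forallb_fd _ (forallb_fd _ H x) y) as K. cbv beta in K.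
  rewrite (proj1 (fd_leb_spec D x y) Hxy), (fd_eqb_neq x y Hne) in K.
  apply Nat.ltb_lt, K.
Qed.

Lemma lower_coversb_spec : lower_coversb = true ->
  forall x, 0 < prk P x -> exists y, ple P y x /\ prk P y = prk P x - 1.
Proof.
  intros H x Hx. pose proof (forallb_fd _ H x) as K. cbv beta in K.
  rewrite (proj2 (Nat.ltb_lt _ _) Hx) in K.
  destruct (existsb_fd _ K) as [y Hy]. apply andb_true_iff in Hy as [Hyx Hy].
  exists y. rewrite (fd_leb_spec D), <- Nat.eqb_eq. split; assumption.
Qed.

Lemma pairwise_joinedb_spec i j : pairwise_joinedb i j = true -> pairwise_joined P i j.
Proof.
  intros H a b Ha Hb Hab.
  pose proof (forallb_fd _ (forallb_fd _ H a) b) as K. cbv beta in K.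
  rewrite Ha, Hb, Nat.eqb_refl, (fd_eqb_neq a b Hab) in K.
  destruct (existsb_fd _ K) as [c Hc]. rewrite !andb_true_iff, Nat.eqb_eq in Hc.
  exists c. rewrite !(fd_leb_spec D). tauto.
Qed.

Lemma unique_joinb_spec i j : unique_joinb i j = true -> unique_join P i j.
Proof.
  intros H a b c c' Ha Hb Hab Hc Hc' Hac Hbc Hac' Hbc'.
  rewrite !(fd_leb_spec D) in Hac, Hbc, Hac', Hbc'.
  pose proof (forallb_fd _ (forallb_fd _ (forallb_fd _ (forallb_fd _ H a) b) c) c') as K. cbv beta in K.
  rewrite Ha, Hb, Hc, Hc', !Nat.eqb_refl, (fd_eqb_neq a b Hab), Hac, Hbc, Hac', Hbc' in K.
  apply (fd_eqb_spec D), K.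
Qed.

Lemma incident_allb_spec i j : incident_allb i j = true -> incident_all P i j.
Proof.
  intros H a c Ha Hc. pose proof (forallb_fd _ (forallb_fd _ H a) c) as K. cbv beta in K.
  rewrite Ha, Hc, !Nat.eqb_refl in K. apply (fd_leb_spec D), K.
Qed.

End FiniteDecision.

Definition sgn_eqb (a b : sgn) : bool :=
  match a, b with Zr, Zr | Pl, Pl | Mi, Mi => true | _, _ => false end.

Lemma sgn_eqb_spec a b : sgn_eqb a b = true <-> a = b.
Proof. destruct a, b; simpl; split; congruence. Qed.

Definition sgn_refb (a b : sgn) : bool := match b with Zr => true | _ => sgn_eqb a b end.

Lemma sgn_refb_spec a b : (b <> Zr -> a = b) <-> sgn_refb a b = true.
Proof. destruct a, b; simpl; firstorder congruence. Qed.

Definition refb (v w : cvec) : bool :=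
  let '(a1, a2, a3) := v in let '(b1, b2, b3) := w in
  sgn_refb a1 b1 && sgn_refb a2 b2 && sgn_refb a3 b3.

Lemma refb_spec v w : refines v w <-> refb v w = true.
Proof.
  destruct v as [[a1 a2] a3], w as [[b1 b2] b3]. simpl.
  rewrite !andb_true_iff, <- !sgn_refb_spec. tauto.
Qed.

Definition hc_leb (x y : hc_face) : bool :=
  match x, y with
  | None, _ => true
  | Some _, None => false
  | Some a, Some b =>
      refb (proj1_sig a) (proj1_sig b) || refb (proj1_sig a) (vneg (proj1_sig b))
  end.

Lemma hc_leb_spec x y : hc_le x y <-> hc_leb x y = true.
Proof.
  destruct x as [a|], y as [b|]; simpl; try tauto.
  - rewrite orb_true_iff, <- !refb_spec. tauto.
  - split; [intros [] | discriminate].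
Qed.

Definition cvec_eqb (v w : cvec) : bool :=
  let '(a1, a2, a3) := v in let '(b1, b2, b3) := w in
  sgn_eqb a1 b1 && sgn_eqb a2 b2 && sgn_eqb a3 b3.

Lemma cvec_eqb_spec v w : cvec_eqb v w = true <-> v = w.
Proof.
  destruct v as [[a1 a2] a3], w as [[b1 b2] b3]. simpl.
  rewrite !andb_true_iff, !sgn_eqb_spec. split.
  - intros [[-> ->] ->]. reflexivity.
  - intros E. injection E. auto.
Qed.

Definition hc_eqb (x y : hc_face) : bool :=
  match x, y with
  | None, None => true
  | Some a, Some b => cvec_eqb (proj1_sig a) (proj1_sig b)
  | _, _ => false
  end.

Lemma hc_eqb_spec x y : hc_eqb x y = true <-> x = y.
Proof.
  destruct x as [[v Hv]|], y as [[w Hw]|]; simpl; try (split; congruence).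
  rewrite cvec_eqb_spec. split.
  - intros <-. do 2 f_equal. apply UIP_dec, bool_dec.
  - intros E. injection E. auto.
Qed.

Definition hc (v : cvec) (H : canonb v = true) : hc_face := Some (exist _ v H).

Definition hc_faces : list hc_face :=
  [None; hc (Zr,Zr,Zr) eq_refl; hc (Zr,Zr,Pl) eq_refl; hc (Zr,Pl,Zr) eq_refl;
   hc (Zr,Pl,Pl) eq_refl; hc (Zr,Pl,Mi) eq_refl; hc (Pl,Zr,Zr) eq_refl;
   hc (Pl,Zr,Pl) eq_refl; hc (Pl,Zr,Mi) eq_refl; hc (Pl,Pl,Zr) eq_refl;
   hc (Pl,Mi,Zr) eq_refl; hc (Pl,Pl,Pl) eq_refl; hc (Pl,Pl,Mi) eq_refl;
   hc (Pl,Mi,Pl) eq_refl; hc (Pl,Mi,Mi) eq_refl].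

Lemma hc_faces_complete x : In x hc_faces.
Proof.
  assert (E : existsb (hc_eqb x) hc_faces = true).
  { destruct x as [[[[a b] c] H]|]; [|reflexivity].
    destruct a, b, c; solve [discriminate H | reflexivity]. }
  apply existsb_exists in E as [y [Hy E]]. apply hc_eqb_spec in E. subst. exact Hy.
Qed.

Definition hemicube_decidable : finite_decidable hemicube :=
  Build_finite_decidable hemicube hc_faces hc_faces_complete hc_leb hc_leb_spec hc_eqb hc_eqb_spec.

Lemma hemicube_graded : graded_from_bottom hemicube.
Proof.
  split; [|split].
  - apply (strict_monob_spec _ hemicube_decidable). vm_compute. reflexivity.
  - apply (lower_coversb_spec _ hemicube_decidable). vm_compute. reflexivity.
  - intros [x|]; simpl; split.
    + destruct x as [[[a b] c] H]. simpl. lia.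
    + intros Hmin. destruct (Hmin None).
    + intros _ y. exact I.
    + reflexivity.
Qed.

Lemma hemicube_like_hemicube : hemicube_like hemicube.
Proof.
  split; [|split].
  - apply (pairwise_joinedb_spec _ hemicube_decidable). vm_compute. reflexivity.
  - apply (unique_joinb_spec _ hemicube_decidable). vm_compute. reflexivity.
  - apply (incident_allb_spec _ hemicube_decidable). vm_compute. reflexivity.
Qed.

Lemma dual_vfig_iso (P : Poset) (v : P) :
  isomorphic (vfig_section P v) hemioctahedron -> isomorphic (dual (vfig_section P v) 4) hemicube.
Proof.
  intros [phi [Hinv Hle]]. exists phi. split; [exact Hinv|]. intros x y. apply (Hle y x).
Qed.

(** * Polytopes with hemicubal facets and hemi-octahedral vertex figures *)

Section HemicubalPolytope.
Variable Q : Poset.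
Hypothesis HQ : is_polytope 4 Q.
Hypothesis Hfacets : has_facets 4 Q hemicube.
Hypothesis Hvfigs : has_vertex_figures Q hemioctahedron.

Lemma facet_hemicube_like F : prk Q F = 4 -> hemicube_like (facet_section Q F).
Proof.
  intros HF. destruct (Hfacets F HF) as [phi Hphi].
  apply (hemicube_like_transfer _ _ phi Hphi); [|exact hemicube_like_hemicube].
  apply order_iso_prk; [apply (facet_section_graded Q 4 HQ) | exact hemicube_graded | exact Hphi].
Qed.

Lemma vfig_hemicube_like v : prk Q v = 1 -> hemicube_like (dual (vfig_section Q v) 4).
Proof.
  intros Hv. destruct (dual_vfig_iso Q v (Hvfigs v Hv)) as [phi Hphi].
  apply (hemicube_like_transfer _ _ phi Hphi); [|exact hemicube_like_hemicube].
  apply order_iso_prk; [apply (dual_vfig_section_graded Q 4 HQ v Hv) | exact hemicube_graded | exact Hphi].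
Qed.

Lemma facet_vertices_joined F a b : prk Q F = 4 -> prk Q a = 1 -> prk Q b = 1 -> a <> b ->
  ple Q a F -> ple Q b F -> exists e, prk Q e = 2 /\ ple Q a e /\ ple Q b e.
Proof.
  intros HF Ha Hb Hab HaF HbF.
  destruct (proj1 (facet_hemicube_like F HF) (exist _ a HaF) (exist _ b HbF) Ha Hb
              (exist_neq Hab)) as [[e HeF] He].
  exists e. exact He.
Qed.

Lemma facet_edge_unique F a b e e' : prk Q F = 4 -> prk Q a = 1 -> prk Q b = 1 -> a <> b ->
  prk Q e = 2 -> prk Q e' = 2 -> ple Q e F -> ple Q e' F ->
  ple Q a e -> ple Q b e -> ple Q a e' -> ple Q b e' -> e = e'.
Proof.
  intros HF Ha Hb Hab He He' HeF He'F Hae Hbe Hae' Hbe'.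
  pose proof (ple_trans Q 4 HQ _ _ _ Hae HeF) as HaF.
  pose proof (ple_trans Q 4 HQ _ _ _ Hbe HeF) as HbF.
  assert (E := proj1 (proj2 (facet_hemicube_like F HF)) (exist _ a HaF) (exist _ b HbF)
                 (exist _ e HeF) (exist _ e' He'F) Ha Hb (exist_neq Hab)
                 He He' Hae Hbe Hae' Hbe').
  injection E. auto.
Qed.

Lemma facet_vertex_below_ridge F a s : prk Q F = 4 -> prk Q a = 1 -> prk Q s = 3 ->
  ple Q a F -> ple Q s F -> ple Q a s.
Proof.
  intros HF Ha Hs HaF HsF.
  exact (proj2 (proj2 (facet_hemicube_like F HF)) (exist _ a HaF) (exist _ s HsF) Ha Hs).
Qed.

Lemma vertex_edge_below_facet v e G : prk Q v = 1 -> prk Q e = 2 -> prk Q G = 4 ->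
  ple Q v e -> ple Q v G -> ple Q e G.
Proof.
  intros Hv He HG Hve HvG.
  apply (proj2 (proj2 (vfig_hemicube_like v Hv)) (exist _ G HvG) (exist _ e Hve));
    cbn [dual vfig_section prk proj1_sig]; lia.
Qed.

Lemma vertex_facets_joined v G H : prk Q v = 1 -> prk Q G = 4 -> prk Q H = 4 -> G <> H ->
  ple Q v G -> ple Q v H -> exists s, prk Q s = 3 /\ ple Q s G /\ ple Q s H.
Proof.
  intros Hv HG HH Hne HvG HvH.
  destruct (proj1 (vfig_hemicube_like v Hv) (exist _ G HvG) (exist _ H HvH))
    as [[s Hvs] (Hs & HsG & HsH)];
    [cbn [dual vfig_section prk proj1_sig]; lia .. | apply exist_neq, Hne |].
  cbn [dual vfig_section prk proj1_sig] in Hs.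
  exists s. split; [lia | auto].
Qed.

Lemma vertex_ridge_unique v G H s s' : prk Q v = 1 -> prk Q G = 4 -> prk Q H = 4 -> G <> H ->
  prk Q s = 3 -> prk Q s' = 3 -> ple Q v s -> ple Q v s' ->
  ple Q s G -> ple Q s H -> ple Q s' G -> ple Q s' H -> s = s'.
Proof.
  intros Hv HG HH Hne Hs Hs' Hvs Hvs' HsG HsH Hs'G Hs'H.
  pose proof (ple_trans Q 4 HQ _ _ _ Hvs HsG) as HvG.
  pose proof (ple_trans Q 4 HQ _ _ _ Hvs HsH) as HvH.
  assert (E : exist _ s Hvs = exist _ s' Hvs').
  { apply (proj1 (proj2 (vfig_hemicube_like v Hv)) (exist _ G HvG) (exist _ H HvH));
      cbn [dual vfig_section prk ple proj1_sig]; auto; try lia.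
    apply exist_neq, Hne. }
  injection E. auto.
Qed.

Lemma vertex_below_facet G y : prk Q G = 4 -> prk Q y = 1 -> ple Q y G.
Proof.
  intros HG Hy.
  destruct (flag_through Q 4 HQ G G (ple_refl Q 4 HQ G)) as [phi [Hphi [EG _]]].
  destruct (flag_through Q 4 HQ y y (ple_refl Q 4 HQ y)) as [psi [Hpsi [Ey _]]].
  rewrite HG in EG. rewrite Hy in Ey.
  destruct (flag_connected Q 4 HQ phi psi Hphi Hpsi) as (k & h & H0 & Hk & Hflags & Hadj).
  assert (Hpath : forall m, m <= k -> ple Q (h m 1) G).
  { induction m as [|m IH]; intros Hm.
    - rewrite H0 by lia. rewrite <- EG. apply (flag_ple Q 4); auto; lia.
    - destruct (Hadj m) as [i (_ & _ & Hsame)]; [lia|].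
      pose proof (proj1 (Hflags m ltac:(lia))) as Hm0.
      pose proof (proj1 (Hflags (S m) Hm)) as Hm1.
      destruct (Nat.eq_dec i 1) as [->|Hi]; [|rewrite <- Hsame by lia; apply IH; lia].
      apply (ple_trans Q 4 HQ _ (h m 2)).
      + rewrite (Hsame 2) by lia. apply (flag_ple Q 4); auto; lia.
      + apply (vertex_edge_below_facet (h m 1)); auto; try (apply IH; lia).
        * apply (flag_prk Q 4); auto; lia.
        * apply (flag_prk Q 4); auto; lia.
        * apply (flag_ple Q 4); auto; lia. }
  rewrite <- Ey, <- (Hk 1) by lia. apply Hpath. lia.
Qed.

Lemma vertices_joined : pairwise_joined Q 1 2.
Proof.
  intros a b Ha Hb Hab.
  destruct (face_above Q 4 HQ a 4) as [F [HF HaF]]; [lia | lia |].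
  apply (facet_vertices_joined F); auto using vertex_below_facet.
Qed.

Lemma edge_unique : unique_join Q 1 2.
Proof.
  intros a b e e' Ha Hb Hab He He' Hae Hbe Hae' Hbe'.
  destruct (face_above Q 4 HQ e 4) as [F [HF HeF]]; [lia | lia |].
  apply (facet_edge_unique F a b); auto.
  apply (vertex_edge_below_facet a); auto. apply (ple_trans Q 4 HQ _ e); auto.
Qed.

Lemma facets_joined : pairwise_joined (dual Q 5) 1 2.
Proof.
  intros G H HG HH Hne. cbn [dual prk ple] in *.
  pose proof (prk_bound Q 4 HQ G). pose proof (prk_bound Q 4 HQ H).
  destruct (face_below Q 4 HQ G 1) as [v [Hv HvG]]; [lia|].
  destruct (vertex_facets_joined v G H) as [s (Hs & HsG & HsH)]; auto; try lia.
  - apply vertex_below_facet; auto; lia.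
  - exists s. rewrite Hs. auto.
Qed.

Lemma ridge_unique : unique_join (dual Q 5) 1 2.
Proof.
  intros G H s s' HG HH Hne Hs Hs' HsG HsH Hs'G Hs'H. cbn [dual prk ple] in *.
  pose proof (prk_bound Q 4 HQ G). pose proof (prk_bound Q 4 HQ H).
  pose proof (prk_bound Q 4 HQ s). pose proof (prk_bound Q 4 HQ s').
  destruct (face_below Q 4 HQ s 1) as [v [Hv Hvs]]; [lia|].
  apply (vertex_ridge_unique v G H); auto; try lia.
  apply (facet_vertex_below_ridge G); auto; try lia.
  apply (ple_trans Q 4 HQ _ s); auto.
Qed.

End HemicubalPolytope.

(** * Coverings *)

Lemma injective_on_next_rank (P R : Poset) (f : P -> R) (k : nat) :
  (forall x, prk R (f x) = prk P x) -> (forall x y, ple P x y -> ple R (f x) (f y)) ->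
  diamond_at P k -> diamond_at R k -> unique_join P k (S k) ->
  injective_on_rank f k -> injective_on_rank f (S k).
Proof.
  intros Hprk Hple HdP HdR Huniq Hinj x y Hx Hy Exy.
  destruct (HdP x Hx) as (z1 & z2 & Hz12 & Hz).
  destruct (HdP y Hy) as (w1 & w2 & Hw12 & Hw).
  destruct (HdR (f y)) as (u1 & u2 & _ & Hu); [rewrite Hprk; exact Hy|].
  assert (Himg : forall z, prk P z = k -> ple P z y -> f z = u1 \/ f z = u2)
    by (intros z Hzk Hzy; apply Hu; rewrite Hprk; auto).
  assert (Hw1 : prk P w1 = k /\ ple P w1 y) by (apply Hw; auto).
  assert (Hw2 : prk P w2 = k /\ ple P w2 y) by (apply Hw; auto).
  assert (Hfw : f w1 <> f w2)
    by (intros E; apply Hw12, Hinj; [apply Hw1 | apply Hw2 | exact E]).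
  assert (Hfw1 : f w1 = u1 \/ f w1 = u2) by (apply Himg; apply Hw1).
  assert (Hfw2 : f w2 = u1 \/ f w2 = u2) by (apply Himg; apply Hw2).
  (* f w1, f w2 are the two faces of rank k below f x = f y *)
  assert (Hsub : forall z, prk P z = k -> ple P z x -> ple P z y).
  { intros z Hzk Hzx.
    assert (Hfz : f z = u1 \/ f z = u2).
    { apply Hu. rewrite Hprk, <- Exy. auto. }
    assert (Hfz' : f z = f w1 \/ f z = f w2).
    { destruct Hfz, Hfw1, Hfw2; first [left; congruence | right; congruence | exfalso; congruence]. }
    destruct Hfz' as [E|E]; apply Hinj in E; auto; subst; tauto. }
  assert (Hz1 : prk P z1 = k /\ ple P z1 x) by (apply Hz; auto).
  assert (Hz2 : prk P z2 = k /\ ple P z2 x) by (apply Hz; auto).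
  apply (Huniq z1 z2); auto; try tauto; apply Hsub; tauto.
Qed.

Section Covering.
Variables (n : nat) (Q R : Poset).
Hypothesis HQ : is_polytope n Q.
Hypothesis HR : is_polytope n R.
Variable f : Q -> R.
Hypothesis Hf : covering n Q R f.

Lemma covering_prk x : prk R (f x) = prk Q x.
Proof. destruct Hf as (H & _); auto. Qed.

Lemma covering_ple x y : ple Q x y -> ple R (f x) (f y).
Proof. destruct Hf as (_ & H & _); auto. Qed.

Lemma covering_flag_neighbour phi i z : is_flag Q n phi -> 1 <= i -> i <= n -> prk Q z = i ->
  ple Q (phi (i - 1)) z -> ple Q z (phi (S i)) -> phi i <> z -> f (phi i) <> f z.
Proof.
  intros Hphi Hi1 Hin Hz Hlo Hhi Hne.
  destruct (flag_exchange Q n HQ phi i z) as [Hpsi Hadj]; auto.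
  destruct Hf as (_ & _ & _ & _ & Hf_adj).
  destruct (Hf_adj i _ _ Hphi Hpsi Hadj) as (_ & Hdiff & _).
  cbv beta in Hdiff. rewrite Nat.eqb_refl in Hdiff. exact Hdiff.
Qed.

Lemma covering_injective_vertices : 1 <= n -> pairwise_joined Q 1 2 -> injective_on_rank f 1.
Proof.
  intros Hn Hjoin x y Hx Hy Exy. destruct (classic (x = y)) as [|Hne]; [assumption | exfalso].
  destruct (Hjoin x y Hx Hy Hne) as [e (He & Hxe & Hye)].
  destruct (flag_through Q n HQ x e Hxe) as [phi (Hphi & E1 & E2)].
  rewrite Hx in E1. rewrite He in E2.
  apply (covering_flag_neighbour phi 1 y); rewrite ?E1, ?E2; auto.
  apply (bottom_below Q n HQ), (flag_prk Q n); auto; lia.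
Qed.

Lemma covering_injective_facets : 1 <= n -> pairwise_joined (dual Q (S n)) 1 2 ->
  injective_on_rank f n.
Proof.
  intros Hn Hjoin x y Hx Hy Exy. destruct (classic (x = y)) as [|Hne]; [assumption | exfalso].
  destruct (Hjoin x y) as [s (Hs & Hsx & Hsy)]; cbn [dual prk ple] in *; try lia; auto.
  pose proof (prk_bound Q n HQ s).
  destruct (flag_through Q n HQ s x Hsx) as [phi (Hphi & E1 & E2)].
  replace (prk Q s) with (n - 1) in E1 by lia. rewrite Hx in E2.
  apply (covering_flag_neighbour phi n y); rewrite ?E1, ?E2; auto.
  apply (top_above Q n HQ), (flag_prk Q n); auto.
Qed.

Lemma covering_injective_edges : unique_join Q 1 2 -> injective_on_rank f 1 ->
  injective_on_rank f 2.
Proof.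
  apply injective_on_next_rank;
    [exact covering_prk | exact covering_ple | exact (diamond_at_1 Q n HQ) | exact (diamond_at_1 R n HR)].
Qed.

Lemma covering_injective_ridges : 1 <= n -> unique_join (dual Q (S n)) 1 2 ->
  injective_on_rank f n -> injective_on_rank f (n - 1).
Proof.
  intros Hn Huniq Hinj.
  assert (Hdual : @injective_on_rank (dual Q (S n)) (dual R (S n)) f 2).
  { apply injective_on_next_rank; auto.
    - intros x. cbn [dual prk]. rewrite covering_prk. reflexivity.
    - intros x y Hxy. exact (covering_ple y x Hxy).
    - exact (dual_diamond_at_1 Q n HQ).
    - exact (dual_diamond_at_1 R n HR).
    - intros x y Hx Hy. cbn [dual prk] in Hx, Hy.
      pose proof (prk_bound Q n HQ x). pose proof (prk_bound Q n HQ y).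
      apply Hinj; lia. }
  intros x y Hx Hy. apply Hdual; cbn [dual prk]; lia.
Qed.

Lemma injective_covering_iso : (forall x y, f x = f y -> x = y) -> isomorphic Q R.
Proof.
  intros Hinj. destruct Hf as (_ & _ & Hsurj & Hlift & _).
  exists f. split.
  - exists (fun y => proj1_sig (constructive_indefinite_description _ (Hsurj y))). split.
    + intros x. apply Hinj. destruct (constructive_indefinite_description _ (Hsurj (f x))). auto.
    + intros y. destruct (constructive_indefinite_description _ (Hsurj y)). auto.
  - intros x y. split; [apply covering_ple|]. intros Hle.
    (* f reflects the order: lift a flag of R through f x <= f y *)
    destruct (flag_through R n HR _ _ Hle) as [phi (Hphi & E1 & E2)].
    destruct (Hlift phi Hphi) as [psi (Hpsi & Hpsi_f)].
    rewrite !covering_prk in E1, E2.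
    pose proof (prk_bound Q n HQ x). pose proof (prk_bound Q n HQ y).
    assert (Ex : psi (prk Q x) = x) by (apply Hinj; rewrite Hpsi_f; auto).
    assert (Ey : psi (prk Q y) = y) by (apply Hinj; rewrite Hpsi_f; auto).
    rewrite <- Ex, <- Ey. apply (flag_ple Q n); auto.
    rewrite <- !covering_prk. apply (prk_le R n HR), Hle.
Qed.

End Covering.

Theorem corollary3p2 (Q : Poset) (HQ : is_universal4 hemicube hemioctahedron Q)
  (R : Poset) (HR : is_polytope 4 R) (f : Q -> R) (Hf : covering 4 Q R f) :
  isomorphic Q R.
Proof.
  destruct HQ as [[HQp _] [Hfacets [Hvfigs _]]].
  assert (Hinj1 : injective_on_rank f 1)
    by (apply (covering_injective_vertices 4 Q R HQp f Hf); [lia | apply vertices_joined; auto]).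
  assert (Hinj2 : injective_on_rank f 2)
    by (apply (covering_injective_edges 4 Q R HQp HR f Hf); [apply edge_unique; auto | exact Hinj1]).
  assert (Hinj4 : injective_on_rank f 4)
    by (apply (covering_injective_facets 4 Q R HQp f Hf); [lia | apply facets_joined; auto]).
  assert (Hinj3 : injective_on_rank f 3)
    by (apply (covering_injective_ridges 4 Q R HQp HR f Hf); [lia | apply ridge_unique; auto | exact Hinj4]).
  apply (injective_covering_iso 4 Q R HQp HR f Hf).
  apply (injective_of_ranks Q R f 5 (covering_prk 4 Q R f Hf) (prk_bound Q 4 HQp)).
  intros k Hk.
  destruct k as [|[|[|[|[|[|k]]]]]]; try assumption; try lia.
  - apply (injective_on_rank_bottom Q 4 HQp).
  - apply (injective_on_rank_top Q 4 HQp).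
Qed.
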